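(* Assume that $\nabla\kappa_S(0)=(m_1,\ldots,m_h)\neq 0$. Then we have the following cases. $(i)$ If there exists $i\in\{1,\ldots,h\}$ such that $x_im_i<0$, then $I_{\mathrm{MD}}(x;\nabla\kappa_S(0))=\infty$. $(ii)$ If there exists $i\in\{1,\ldots,h\}$ such that $m_i=0$ and $x_i\neq 0$, then $I_{\mathrm{MD}}(x;\nabla\kappa_S(0))=\infty$. $(iii)$ If there exists $c(x)\geq 0$ such that $x_i=c(x)m_i$ for every $i\in\{1,\ldots,h\}$, then $I_{\mathrm{MD}}(x;\nabla\kappa_S(0))=H_\nu(c(x);1)$ or, equivalently, $I_{\mathrm{MD}}(x;\nabla\kappa_S(0))=H_\nu(x_i;m_i)$ for every $i\in\{1,\ldots,h\}$.
   Context: Let $\{S(t):t\geq 0\}$ be an $\mathbb{R}^h$-valued Lévy process such that $\kappa_S(\theta):=\log\mathbb{E}[e^{\langle\theta,S(1)\rangle}]$ is finite in a neighborhood of the origin of $\mathbb{R}^h$ (where $\langle\cdot,\cdot\rangle$ is the inner product in $\mathbb{R}^h$), and let $\nu\in(0,1)$ and $\{L_\nu(t):t\geq 0\}$ be an inverse stable subordinator independent of $\{S(t)\}$. For $x=(x_1,\ldots,x_h)\in\mathbb{R}^h$ and $\nabla\kappa_S(0)\neq 0$, the (noncentral moderate deviation) rate function is defined by $$I_{\mathrm{MD}}(x;\nabla\kappa_S(0)):=\sup_{\theta\in\mathbb{R}^h}\{\langle\theta,x\rangle-(\langle\theta,\nabla\kappa_S(0)\rangle)^{1/\nu}1_{\langle\theta,\nabla\kappa_S(0)\rangle\geq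 0}\}$$ (it governs the LDP, with speed $1/a_t$, of $\{(a_tt)^{1-\nu}S(L_\nu(t))/t\}$ for $a_t\to 0$, $ta_t\to\infty$). For real $x$ and $m\neq 0$ define $$H_\nu(x;m):=\begin{cases}(\nu^{\nu/(1-\nu)}-\nu^{1/(1-\nu)})\left(\frac{x}{m}\right)^{1/(1-\nu)}&\text{if } \frac{x}{m}\geq 0\\ \infty&\text{if } \frac{x}{m}<0.\end{cases}$$ *)

From HB Require Import structures.
From mathcomp Require Import all_boot all_order all_algebra.
From mathcomp Require Import all_classical all_reals all_analysis.
Set Implicit Arguments. Unset Strict Implicit. Unset Printing Implicit Defensive.
Import Order.TTheory GRing.Theory Num.Theory.
Local Open Scope classical_set_scope.
Local Open Scope ring_scope.

Definition inner (R : realType) (h : nat) (a b : 'I_h -> R) : R :=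
  \sum_(i < h) a i * b i.

Definition I_MD (R : realType) (nu : R) (h : nat) (x m : 'I_h -> R) : \bar R :=
  ereal_sup [set ((inner th x -
       (if 0 <= inner th m then powR (inner th m) (1 / nu) else 0))%:E)%E
     | th in [set: 'I_h -> R]].

Definition H_nu (R : realType) (nu x m : R) : \bar R :=
  if 0 <= x / m then
    ((powR nu (nu / (1 - nu)) - powR nu (1 / (1 - nu))) * powR (x / m) (1 / (1 - nu)))%:E
  else +oo%E.

From HB Require Import structures.
From mathcomp Require Import all_boot all_order all_algebra.
From mathcomp Require Import all_classical all_reals all_analysis.
From mathcomp Require Import ring lra.
Set Implicit Arguments. Unset Strict Implicit. Unset Printing Implicit Defensive.
Import Order.TTheory GRing.Theory Num.Theory.
Local Open Scope ring_scope.

(* The supremand of I_MD is positively homogeneous of degree one along any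
   direction [th] with <th, m> <= 0, where the penalty term vanishes; so a
   direction with <th, x> > 0 as well makes I_MD infinite, which covers (i)
   and (ii).  For x = c m the supremum reduces to the one-dimensional
   Legendre transform of s |-> s^(1/nu) on s >= 0 at c, which Young's
   inequality with exponents 1/nu and 1/(1-nu) bounds by H_nu(c; 1), with
   equality at s = (c nu)^(nu/(1-nu)). *)

Definition md_const (R : realType) (nu : R) : R :=
  nu `^ (nu / (1 - nu)) - nu `^ (1 / (1 - nu)).

Section PowerConjugate.
Variables (R : realType) (nu : R).
Hypothesis nu01 : 0 < nu < 1.

Let nu_gt0 : 0 < nu. Proof. by case/andP: nu01. Qed.
Let nu_neq0 : nu != 0. Proof. exact: lt0r_neq0. Qed.
Let onemnu_neq0 : 1 - nu != 0.
Proof. by case/andP: nu01 => _ nu1; rewrite subr_eq0 eq_sym lt_eqF. Qed.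
Let onemnu_inv_gt0 : 0 < 1 / (1 - nu).
Proof. by case/andP: nu01 => _ nu1; rewrite divr_gt0 // subr_gt0. Qed.

Let exp_shift : nu / (1 - nu) = 1 / (1 - nu) - 1.
Proof. by field. Qed.

Lemma md_constE : md_const nu = (1 - nu) * nu `^ (nu / (1 - nu)).
Proof.
rewrite /md_const -[in X in _ - X](mulr_powRB1 (ltW nu_gt0) onemnu_inv_gt0).
by rewrite -exp_shift mulrBl mul1r.
Qed.

Lemma md_const_ge0 : 0 <= md_const nu.
Proof.
by case/andP: nu01 => _ nu1; rewrite md_constE mulr_ge0 ?powR_ge0 // subr_ge0 ltW.
Qed.

Lemma young_powR_inv (c s : R) : 0 <= c -> 0 <= s ->
  c * s - s `^ (1 / nu) <= md_const nu * c `^ (1 / (1 - nu)).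
Proof.
move=> c0 s0; set a := nu `^ nu.
have a_gt0 : 0 < a by rewrite powR_gt0.
have conj_exp : (1 / nu)^-1 + (1 / (1 - nu))^-1 = 1.
  by rewrite !invf_div !divr1 addrC subrK.
(* Young's inequality for the pair (s / nu^nu, c nu^nu). *)
have := conjugate_powR (divr_ge0 s0 (ltW a_gt0)) (mulr_ge0 c0 (ltW a_gt0))
  (divr_gt0 ltr01 nu_gt0) onemnu_inv_gt0 conj_exp.
have -> : s / a * (c * a) = c * s by field; rewrite gt_eqF.
rewrite powRM ?invr_ge0 ?(ltW a_gt0) // -powRN -!powRrM.
rewrite (_ : - nu * (1 / nu) = -1); last by field.
rewrite powR_inv1 ?(ltW nu_gt0) // powRM ?(ltW a_gt0) // -powRrM.
rewrite [nu * _]mulrA [nu * 1]mulr1.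
rewrite md_constE.
move: (s `^ _) (c `^ _) (nu `^ _) => P Q N.
have -> : P * nu^-1 / (1 / nu) = P by field.
have -> : Q * N / (1 / (1 - nu)) = (1 - nu) * N * Q by field.
by rewrite lerBlDr addrC.
Qed.

Lemma young_powR_inv_attained (c : R) : 0 <= c ->
  let s := (c * nu) `^ (nu / (1 - nu)) in
  c * s - s `^ (1 / nu) = md_const nu * c `^ (1 / (1 - nu)).
Proof.
move=> c0 s; rewrite /s -powRrM.
rewrite (_ : nu / (1 - nu) * (1 / nu) = 1 / (1 - nu)); last by field; rewrite onemnu_neq0.
rewrite !powRM ?(ltW nu_gt0) // exp_shift mulrA mulr_powRB1 //.
by rewrite -exp_shift /md_const; ring.
Qed.

End PowerConjugate.

Section InnerProduct.
Variables (R : realType) (h : nat).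
Implicit Types (a b : 'I_h -> R) (t : R).

Definition coordv (j : 'I_h) t : 'I_h -> R := fun k => if k == j then t else 0.

Lemma inner_coordv j t b : inner (coordv j t) b = t * b j.
Proof.
rewrite /inner (bigD1 j) //= /coordv eqxx big1 ?addr0 // => k /negbTE ->.
by rewrite mul0r.
Qed.

Lemma inner_scalel t a b : inner (fun k => t * a k) b = t * inner a b.
Proof. by rewrite /inner mulr_sumr; apply: eq_bigr => k _; rewrite mulrA. Qed.

Lemma inner_scaler t a b : inner a (fun k => t * b k) = t * inner a b.
Proof. by rewrite /inner mulr_sumr; apply: eq_bigr => k _; rewrite mulrCA. Qed.

End InnerProduct.

Lemma ereal_sup_image_unbounded (R : realType) (T : Type) (g : T -> R) :
  (forall r, exists t, r <= g t) ->
  ereal_sup [set (g t)%:E | t in [set: T]] = +oo%E.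
Proof.
move=> g_unbounded; rewrite -(image_comp g EFin).
apply: hasNub_ereal_sup; last by have [t _] := g_unbounded 0; exists (g t), t.
case=> M M_ub; have [t Mt] := g_unbounded (M + 1).
have := M_ub (g t) (ex_intro2 _ _ t I erefl); lra.
Qed.

Lemma md_penalty_nonpos (R : realType) (nu s : R) : 0 < nu -> s <= 0 ->
  (if 0 <= s then s `^ (1 / nu) else 0) = 0.
Proof.
move=> nu_gt0 s_le0; case: ifP => // s_ge0.
have -> : s = 0 by apply/eqP; rewrite eq_le s_le0 s_ge0.
by rewrite powR0 // div1r invr_eq0 gt_eqF.
Qed.

Lemma I_MD_pinfty_of_direction (R : realType) (nu : R) (h : nat)
    (x m th : 'I_h -> R) :
  0 < nu -> inner th m <= 0 -> 0 < inner th x -> I_MD nu x m = +oo%E.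
Proof.
move=> nu_gt0 thm_le0 thx_gt0; apply: ereal_sup_image_unbounded => r.
exists (fun k => `|r| / inner th x * th k).
rewrite !inner_scalel md_penalty_nonpos //; last first.
  by rewrite mulr_ge0_le0 // divr_ge0 // ltW.
by rewrite subr0 divfK ?gt_eqF ?ler_norm.
Qed.

Lemma I_MD_collinear (R : realType) (nu c : R) (h : nat) (m : 'I_h -> R) :
  0 < nu < 1 -> (exists j, m j != 0) -> 0 <= c ->
  I_MD nu (fun i => c * m i) m = (md_const nu * c `^ (1 / (1 - nu)))%:E.
Proof.
move=> nu01 [j mj] c0; apply/le_anti/andP; split.
  apply: ge_ereal_sup => _ [th _ <-]; rewrite lee_fin inner_scaler.
  have [thm_ge0|thm_lt0] := lerP 0 (inner th m); first exact: young_powR_inv.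
  apply: (le_trans (y := 0)); first by rewrite subr0 mulr_ge0_le0 // ltW.
  by rewrite mulr_ge0 ?md_const_ge0 ?powR_ge0.
apply: ereal_sup_ubound.
exists (coordv j ((c * nu) `^ (nu / (1 - nu)) / m j)) => //.
by rewrite inner_scaler inner_coordv divfK // powR_ge0 young_powR_inv_attained.
Qed.

Theorem proposition3p4 (R : realType) (nu : R) (h : nat) (m x : 'I_h -> R) :
  0 < nu < 1 ->
  (exists i, m i != 0) ->
  ((exists i, x i * m i < 0) -> I_MD nu x m = +oo%E) /\
  ((exists i, m i = 0 /\ x i != 0) -> I_MD nu x m = +oo%E) /\
  (forall c : R, 0 <= c -> (forall i, x i = c * m i) ->
     I_MD nu x m = H_nu nu c 1 /\
     (forall i, m i != 0 -> I_MD nu x m = H_nu nu (x i) (m i))).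
Proof.
move=> nu01 m_nz; have /andP[nu_gt0 _] := nu01.
split; [|split].
- case=> i xm_lt0; apply: (I_MD_pinfty_of_direction (th := coordv i (- m i))) => //.
    by rewrite inner_coordv mulNr oppr_le0 -expr2 sqr_ge0.
  by rewrite inner_coordv mulNr oppr_gt0 mulrC.
- case=> i [mi0 xi_neq0].
  apply: (I_MD_pinfty_of_direction (th := coordv i (x i))) => //.
    by rewrite inner_coordv mi0 mulr0.
  by rewrite inner_coordv -expr2 exprn_even_gt0.
move=> c c0 hx.
have -> : x = (fun i => c * m i) by apply/funext.
have I_MD_H : I_MD nu (fun i => c * m i) m = H_nu nu c 1.
  by rewrite I_MD_collinear // /H_nu divr1 c0.
by split=> // i mi; rewrite I_MD_H /H_nu mulfK // divr1.
Qed.
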